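(* In the setting below, the function $f\mapsto \mathcal L(f)$ is concave on $[0,\infty)^{n\times p}$.
   Context: Let $M=(m_{ij})\in\{0,1\}^{n\times p}$, $m_i=\sum_jm_{ij}\ge1$ for all $i$, $m=\sum_im_i$, and fix constants $\hat\sigma_{1,j}>0$ ($j=1,\dots,p$), $\hat\sigma_2>0$. For $0<b<c$ and $q_1,q_2>0$ with $q_1\tanh(q_2(c-b))=b$, let $d=b^2/2+(q_1/q_2)\ln\cosh(q_2(c-b))$ and define $\rho_{b,c}(z)=z^2/2$ if $|z|\le b$, $\rho_{b,c}(z)=d-(q_1/q_2)\ln\cosh(q_2(c-|z|))$ if $b\le|z|\le c$, $\rho_{b,c}(z)=d$ if $|z|\ge c$. Let $\rho_1=\rho_{b_1,c_1}$, $\rho_2=\rho_{b_2,c_2}$ (each with its own admissible constants) and $h_k(z)=\rho_k(\sqrt z)$ for $z\ge0$. For $f=(f_{ij})\in[0,\infty)^{n\times p}$ define $$\mathcal L(f)=\frac{\hat\sigma_2^2}{m}\sum_{i=1}^n m_i\,h_2\!\Big(\frac{1}{m_i\hat\sigma_2^2}\sum_{j=1}^p m_{ij}\hat\sigma_{1,j}^2\,h_1\big(f_{ij}/\hat\sigma_{1,j}^2\big)\Big).$$ (With $f_{ij}=r_{ij}^2$ this is the cellPCA objective $\frac{\hat\sigma_2^2}{m}\sum_i m_i\rho_2(\mathrm{rt}_i/\hat\sigma_2)$, $\mathrm{rt}_i=\sqrt{\frac1{m_i}\sum_jm_{ij}\hat\sigma_{1,j}^2\rho_1(r_{ij}/\hat\sigma_{1,j})}$.)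 *)

From mathcomp Require Import all_boot all_order all_algebra.
From mathcomp Require Import all_classical all_reals all_analysis.
Set Implicit Arguments. Unset Strict Implicit. Unset Printing Implicit Defensive.
Import Order.TTheory GRing.Theory Num.Theory.
Local Open Scope ring_scope.

Section Defs.
Variable R : realType.

Definition cosh (x : R) : R := (expR x + expR (- x)) / 2.
Definition sinh (x : R) : R := (expR x - expR (- x)) / 2.
Definition tanh (x : R) : R := sinh x / cosh x.

Definition rho_admissible (b c q1 q2 : R) : Prop :=
  [/\ 0 < b, b < c, 0 < q1, 0 < q2 & q1 * tanh (q2 * (c - b)) = b].

Definition rho_d (b c q1 q2 : R) : R :=
  b ^+ 2 / 2 + (q1 / q2) * ln (cosh (q2 * (c - b))).

Definition rho (b c q1 q2 : R) (z : R) : R :=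
  if `|z| <= b then z ^+ 2 / 2
  else if `|z| <= c then rho_d b c q1 q2 - (q1 / q2) * ln (cosh (q2 * (c - `|z|)))
  else rho_d b c q1 q2.

Definition hrho (b c q1 q2 : R) (z : R) : R := rho b c q1 q2 (Num.sqrt z).

Definition cellL (n p : nat) (M : 'I_n -> 'I_p -> bool)
  (sig1 : 'I_p -> R) (sig2 : R)
  (b1 c1 q11 q12 b2 c2 q21 q22 : R) (f : 'M[R]_(n, p)) : R :=
  let mi := fun i : 'I_n => (\sum_(j < p) nat_of_bool (M i j))%N in
  let m := (\sum_(i < n) mi i)%N in
  sig2 ^+ 2 / m%:R *
  \sum_(i < n) (mi i)%:R *
     hrho b2 c2 q21 q22
       ((mi i)%:R^-1 / sig2 ^+ 2 *
        \sum_(j < p) (nat_of_bool (M i j))%:R * sig1 j ^+ 2 *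
                     hrho b1 c1 q11 q12 (f i j / sig1 j ^+ 2)).

End Defs.

(* h(z) = rho(sqrt z) is concave and nondecreasing on [0, oo): on each of the pieces
   [0, b^2], [b^2, c^2] and [c^2, oo) its secant slopes are bracketed by the values
   at the endpoints of one nonincreasing, nonnegative slope function, equal to
   rho'(sqrt z) / (2 sqrt z) in the middle, where the mean value theorem for
   ln cosh does the work.  Such brackets glue across the junctions.  The objective
   is a nonnegative combination of h_2 applied to nonnegative combinations of h_1
   at linear functions of f, and a nondecreasing concave function of a concave
   function is concave. *)

From mathcomp Require Import all_boot all_order all_algebra.
From mathcomp Require Import all_classical all_reals all_analysis.
From mathcomp Require Import ring lra.
Import Order.TTheory GRing.Theory Num.Theory.
Local Open Scope ring_scope.
Local Open Scope classical_set_scope.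
Set Implicit Arguments. Unset Strict Implicit.

Section Hyperbolic.
Variable R : realType.
Implicit Types x y : R.

Definition lncosh x := ln (cosh x).

Lemma cosh_gt0 x : 0 < cosh x.
Proof. by rewrite /cosh divr_gt0 // addr_gt0 // expR_gt0. Qed.

Lemma is_derive_cosh x : is_derive x 1 (@cosh R) (sinh x).
Proof.
rewrite /cosh /sinh.
have dexpN : is_derive x 1 (fun y : R => expR (- y)) (- expR (- x)).
  have := @is_derive1_comp R expR (fun y => - y) x (expR (- x)) (-1) _ _.
  by rewrite mulrN1; apply.
have dsum : is_derive x 1 (fun y : R => expR y + expR (- y)) (expR x - expR (- x)).
  exact: is_deriveD.
have := is_deriveM dsum (is_derive_cst (2^-1 : R) x 1).
by move=> d; apply: (is_derive_eq d); rewrite scaler0 add0r /= /GRing.scale /= mulrC.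
Qed.

Lemma is_derive_lncosh x : is_derive x 1 lncosh (tanh x).
Proof.
have := is_derive1_comp (is_derive1_ln (cosh_gt0 x)) (is_derive_cosh x).
by move=> d; apply: (is_derive_eq d); rewrite /tanh mulrC.
Qed.

Lemma tanhE x : tanh x = 1 - 2 / (expR x ^+ 2 + 1).
Proof.
rewrite /tanh /sinh /cosh expRN.
have ex := expR_gt0 x.
have ex0 : expR x != 0 by rewrite gt_eqF.
have ex2 : expR x ^+ 2 + 1 != 0 by rewrite gt_eqF // addr_gt0 // exprn_gt0.
by field; rewrite ex0 ex2.
Qed.

Lemma ler_tanh x y : x <= y -> tanh x <= tanh y.
Proof.
move=> xy; rewrite !tanhE lerD2l lerN2.
have ex := expR_gt0 x; have ey := expR_gt0 y.
rewrite ler_pdivrMr ?addr_gt0 ?exprn_gt0 // mulrAC ler_pdivlMr ?addr_gt0 ?exprn_gt0 //.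
have exy : expR x <= expR y by rewrite ler_expR.
nra.
Qed.

Lemma tanh0 : tanh 0 = 0 :> R.
Proof. by rewrite /tanh /sinh oppr0 subrr mul0r mul0r. Qed.

Lemma tanh_ge0 x : 0 <= x -> 0 <= tanh x.
Proof. by move=> /ler_tanh; rewrite tanh0. Qed.

Lemma lncosh0 : lncosh 0 = 0.
Proof. by rewrite /lncosh /cosh oppr0 expR0 -mulr2n divrr ?ln1 // unitfE pnatr_eq0. Qed.

Lemma lncosh_secant a A : a <= A ->
  tanh a * (A - a) <= lncosh A - lncosh a <= tanh A * (A - a).
Proof.
move=> aA.
have [x xaA ->] : exists2 x, x \in `[a, A]%R & lncosh A - lncosh a = tanh x * (A - a).
  apply: (@MVT_segment R lncosh (@tanh R) a A aA) => [x _|].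
    exact: is_derive_lncosh.
  by apply: derivable_within_continuous => x _; have [] := is_derive_lncosh x.
move: xaA; rewrite in_itv /= => /andP[ax xA].
by rewrite !ler_wpM2r ?subr_ge0 ?ler_tanh.
Qed.

End Hyperbolic.

(* [g] acts as a nonincreasing supergradient of [h] on [S]; unlike concavity
   itself, this property can be glued across adjacent pieces (lemma
   [secant_bracket_glue]) as long as one slope function serves all of them. *)
Section SecantBracket.
Variable R : realDomainType.
Implicit Types (h g : R -> R) (S : set R).

Definition secant_bracket h g S := forall u v, S u -> S v -> u <= v ->
  g v * (v - u) <= h v - h u <= g u * (v - u).

Lemma eq_secant_bracket h g h' g' S : secant_bracket h g S ->
  (forall z, S z -> h z = h' z /\ g z = g' z) -> secant_bracket h' g' S.
Proof.
move=> hg e u v Su Sv uv.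
by have [<- <-] := e u Su; have [<- <-] := e v Sv; exact: hg.
Qed.

Lemma sub_secant_bracket h g S S' : secant_bracket h g S -> S' `<=` S ->
  secant_bracket h g S'.
Proof. by move=> hg sub u v Su Sv; apply: hg; apply: sub. Qed.

Lemma secant_bracket_slope_le h g S u v w : secant_bracket h g S ->
  S u -> S v -> u <= v -> 0 <= w -> g v * w <= g u * w.
Proof.
move=> hg Su Sv; rewrite le_eqVlt => /orP[/eqP -> //|uv] w0.
have /andP[lo up] := hg u v Su Sv (ltW uv).
have vu : 0 < v - u by rewrite subr_gt0.
by rewrite ler_wpM2r // -(ler_pM2r vu) (le_trans lo up).
Qed.

Lemma secant_bracket_glue h g P Q m :
  secant_bracket h g P -> secant_bracket h g Q ->
  (forall x, P x -> x <= m) -> P m -> (forall x, Q x -> m <= x) -> Q m ->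
  secant_bracket h g (P `|` Q).
Proof.
move=> hgP hgQ Ple Pm Qge Qm u v [Pu|Qu] [Pv|Qv] uv.
- exact: hgP.
- have [um mv] := (Ple u Pu, Qge v Qv).
  have /andP[loP upP] := hgP u m Pu Pm um.
  have /andP[loQ upQ] := hgQ m v Qm Qv mv.
  have -> : h v - h u = (h v - h m) + (h m - h u) by ring.
  have split_at_m (k : R) : k * (v - u) = k * (v - m) + k * (m - u) by ring.
  rewrite !split_at_m; apply/andP; split; apply: lerD.
  + exact: loQ.
  + apply: le_trans loP.
    by apply: (secant_bracket_slope_le hgQ Qm Qv mv); rewrite subr_ge0.
  + apply: le_trans upQ _.
    by apply: (secant_bracket_slope_le hgP Pu Pm um); rewrite subr_ge0.
  + exact: upP.
- have um := Qge u Qu; have vm := Ple v Pv.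
  have eu : u = m by apply/eqP; rewrite eq_le (le_trans uv vm) um.
  have ev : v = m by apply/eqP; rewrite eq_le vm (le_trans um uv).
  by rewrite eu ev; exact: hgP.
- exact: hgQ.
Qed.

Lemma secant_bracket_supergradient h g S x y : secant_bracket h g S ->
  S x -> S y -> h y <= h x + g x * (y - x).
Proof.
move=> hg Sx Sy; case: (leP x y) => [xy|yx].
  by have /andP[_ up] := hg x y Sx Sy xy; lra.
have /andP[lo _] := hg y x Sy Sx (ltW yx).
have -> : g x * (y - x) = - (g x * (x - y)) by ring.
lra.
Qed.

Lemma secant_bracket_concave h g S x y t : secant_bracket h g S ->
  S x -> S y -> S (t * x + (1 - t) * y) -> 0 <= t <= 1 ->
  t * h x + (1 - t) * h y <= h (t * x + (1 - t) * y).
Proof.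
move=> hg Sx Sy Sz /andP[t0 t1].
set z := t * x + (1 - t) * y.
have t1' : 0 <= 1 - t by rewrite subr_ge0.
have := ler_wpM2l t0 (secant_bracket_supergradient hg Sz Sx).
have := ler_wpM2l t1' (secant_bracket_supergradient hg Sz Sy).
have e : t * (h z + g z * (x - z)) + (1 - t) * (h z + g z * (y - z)) = h z.
  by rewrite /z; ring.
lra.
Qed.

Lemma secant_bracket_nondecreasing h g S x y : secant_bracket h g S ->
  (forall z, S z -> 0 <= g z) -> S x -> S y -> x <= y -> h x <= h y.
Proof.
move=> hg g0 Sx Sy xy; have /andP[lo _] := hg x y Sx Sy xy.
by rewrite -subr_ge0 (le_trans _ lo) // mulr_ge0 ?g0 ?subr_ge0.
Qed.

End SecantBracket.

Lemma sqr_secant_bounds (R : realFieldType) (K s t : R) : 0 <= K -> 0 < s <= t ->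
  K / (2 * t) * (t ^+ 2 - s ^+ 2) <= K * (t - s) <= K / (2 * s) * (t ^+ 2 - s ^+ 2).
Proof.
move=> K0 /andP[s0 st]; have t0 := lt_le_trans s0 st.
apply/andP; split; rewrite -subr_ge0.
  have -> : K * (t - s) - K / (2 * t) * (t ^+ 2 - s ^+ 2) = K * (t - s) ^+ 2 / (2 * t).
    by field; rewrite gt_eqF.
  by apply: divr_ge0; [rewrite mulr_ge0 ?sqr_ge0 | lra].
have -> : K / (2 * s) * (t ^+ 2 - s ^+ 2) - K * (t - s) = K * (t - s) ^+ 2 / (2 * s).
  by field; rewrite gt_eqF.
by apply: divr_ge0; [rewrite mulr_ge0 ?sqr_ge0 | lra].
Qed.

Lemma secant_bracket_sqrt (R : rcfType) (phi psi : R -> R) (S : set R) :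
  secant_bracket phi psi S -> (forall s, S s -> 0 < s /\ 0 <= psi s) ->
  secant_bracket (phi \o Num.sqrt) (fun z => psi (Num.sqrt z) / (2 * Num.sqrt z))
    [set z | 0 <= z /\ S (Num.sqrt z)].
Proof.
move=> hg pos u v [u0 Su] [v0 Sv] uv /=.
set s := Num.sqrt u; set t := Num.sqrt v.
have [s0 psis] := pos s Su; have [_ psit] := pos t Sv.
have st : s <= t by rewrite ler_sqrt.
have /andP[lo up] := hg s t Su Sv st.
have -> : v - u = t ^+ 2 - s ^+ 2 by rewrite !sqr_sqrtr.
have s0t : 0 < s <= t by rewrite s0 st.
have /andP[lot _] := sqr_secant_bounds psit s0t.
have /andP[_ ups] := sqr_secant_bounds psis s0t.
by rewrite (le_trans lot lo) (le_trans up ups).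
Qed.

Lemma sqrtr_le_sqr (R : rcfType) (b z : R) : 0 <= b -> (Num.sqrt z <= b) = (z <= b ^+ 2).
Proof. by move=> b0; rewrite -{1}(ger0_norm b0) -sqrtr_sqr ler_sqrt // sqr_ge0. Qed.

Lemma sqr_le_sqrtr (R : rcfType) (b z : R) : 0 <= b -> 0 <= z ->
  (b <= Num.sqrt z) = (b ^+ 2 <= z).
Proof. by move=> b0 z0; rewrite -{1}(ger0_norm b0) -sqrtr_sqr ler_sqrt. Qed.

Section Rho.
Variables (R : realType) (b c q1 q2 : R).
Hypothesis adm : rho_admissible b c q1 q2.

Definition rho_mid (s : R) := rho_d b c q1 q2 - q1 / q2 * lncosh (q2 * (c - s)).
Definition rho_mid_slope (s : R) := q1 * tanh (q2 * (c - s)).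

Definition hrho_slope (z : R) :=
  if z <= b ^+ 2 then 2^-1
  else if z <= c ^+ 2 then rho_mid_slope (Num.sqrt z) / (2 * Num.sqrt z)
  else 0.

Let b_gt0 : 0 < b. Proof. by case: adm. Qed.
Let c_gt0 : 0 < c. Proof. by case: adm => b0 bc _ _ _; exact: lt_trans bc. Qed.
Let b_ge0 : 0 <= b. Proof. exact: ltW. Qed.
Let c_ge0 : 0 <= c. Proof. exact: ltW. Qed.
Let b2_lt_c2 : b ^+ 2 < c ^+ 2.
Proof. by case: adm => _ bc _ _ _; rewrite ltr_pXn2r // ?nnegrE ltW. Qed.

Lemma rho_mid_secant : secant_bracket rho_mid rho_mid_slope setT.
Proof.
have [_ _ q10 q20 _] := adm.
move=> u v _ _ uv; set a := q2 * (c - v); set A := q2 * (c - u).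
have aA : a <= A by apply: ler_wpM2l; [exact: ltW | lra].
have eH : rho_mid v - rho_mid u = q1 / q2 * (lncosh A - lncosh a).
  by rewrite /rho_mid -/a -/A; ring.
have eA : forall k, q1 * k * (v - u) = q1 / q2 * (k * (A - a)).
  by move=> k; rewrite /a /A; field; rewrite gt_eqF.
have /andP[lo up] := lncosh_secant aA.
rewrite /rho_mid_slope -/a -/A !eA eH.
by rewrite !ler_pM2l ?divr_gt0 // lo up.
Qed.

Lemma rho_mid_slope_ge0 s : s <= c -> 0 <= rho_mid_slope s.
Proof.
have [_ _ q10 q20 _] := adm.
move=> sc; apply: mulr_ge0 (ltW q10) (tanh_ge0 _).
by apply: mulr_ge0 (ltW q20) _; rewrite subr_ge0.
Qed.

Lemma hrho_mid_secant :
  secant_bracket (rho_mid \o Num.sqrt) (fun z => rho_mid_slope (Num.sqrt z) / (2 * Num.sqrt z))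
    [set z | b ^+ 2 <= z <= c ^+ 2].
Proof.
apply: sub_secant_bracket (secant_bracket_sqrt (S := [set s | b <= s <= c]) _ _) _.
- exact: sub_secant_bracket rho_mid_secant (subsetT _).
- move=> s /andP[bs sc]; split; first exact: lt_le_trans bs.
  exact: rho_mid_slope_ge0.
- move=> z /andP[bz zc]; have z0 : 0 <= z by rewrite (le_trans _ bz) ?sqr_ge0.
  by split=> //=; rewrite sqr_le_sqrtr ?sqrtr_le_sqr ?bz ?zc // ltW.
Qed.

Lemma hrho_low z : 0 <= z <= b ^+ 2 ->
  hrho b c q1 q2 z = z / 2 /\ hrho_slope z = 2^-1.
Proof.
move=> /andP[z0 zb]; rewrite /hrho_slope zb; split=> //.
by rewrite /hrho /rho ger0_norm ?sqrtr_ge0 // sqrtr_le_sqr ?b_ge0 // zb sqr_sqrtr.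
Qed.

(* At the junction [z = b^2] the two slope formulas agree precisely because of
   the admissibility equation [q1 * tanh (q2 * (c - b)) = b]. *)
Lemma hrho_mid z : b ^+ 2 <= z <= c ^+ 2 -> hrho b c q1 q2 z = rho_mid (Num.sqrt z)
  /\ hrho_slope z = rho_mid_slope (Num.sqrt z) / (2 * Num.sqrt z).
Proof.
move=> /andP[bz zc]; have z0 : 0 <= z by rewrite (le_trans _ bz) ?sqr_ge0.
rewrite /hrho /rho /hrho_slope ger0_norm ?sqrtr_ge0 // !sqrtr_le_sqr ?b_ge0 ?c_ge0 // zc.
case: ifP => zb //; have -> : z = b ^+ 2 by apply/eqP; rewrite eq_le zb bz.
have [_ _ _ q20 adm_b] := adm.
rewrite sqrtr_sqr ger0_norm ?ltW // /rho_mid_slope adm_b; split.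
  by rewrite /rho_mid /rho_d /lncosh addrK.
by field; rewrite gt_eqF.
Qed.

Lemma hrho_high z : c ^+ 2 <= z -> hrho b c q1 q2 z = rho_d b c q1 q2 /\ hrho_slope z = 0.
Proof.
move=> cz; have z0 : 0 <= z by rewrite (le_trans _ cz) ?sqr_ge0.
have zb : (z <= b ^+ 2) = false by apply/negbTE; rewrite -ltNge (lt_le_trans b2_lt_c2 cz).
rewrite /hrho /rho /hrho_slope ger0_norm ?sqrtr_ge0 // !sqrtr_le_sqr ?b_ge0 ?c_ge0 // zb.
case: ifP => zc //; have -> : z = c ^+ 2 by apply/eqP; rewrite eq_le zc cz.
rewrite sqrtr_sqr ger0_norm ?ltW // /rho_mid_slope subrr mulr0 tanh0 mulr0 mul0r.
by rewrite -/(lncosh 0) lncosh0 mulr0 subr0.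
Qed.

Lemma hrho_secant : secant_bracket (hrho b c q1 q2) hrho_slope [set z | 0 <= z].
Proof.
have low : secant_bracket (hrho b c q1 q2) hrho_slope [set z | 0 <= z <= b ^+ 2].
  apply: (@eq_secant_bracket _ (fun z => z / 2) (fun=> 2^-1)).
    by move=> u v _ _ _; rewrite -[X in _ <= X <= _]mulrBl mulrC lexx.
  by move=> z /hrho_low[-> ->].
have mid : secant_bracket (hrho b c q1 q2) hrho_slope [set z | b ^+ 2 <= z <= c ^+ 2].
  by apply: eq_secant_bracket hrho_mid_secant _ => z /hrho_mid[-> ->].
have high : secant_bracket (hrho b c q1 q2) hrho_slope [set z | c ^+ 2 <= z].
  apply: (@eq_secant_bracket _ (fun=> rho_d b c q1 q2) (fun=> 0)).
    by move=> u v _ _ _; rewrite subrr !mul0r lexx.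
  by move=> z /hrho_high[-> ->].
have b2_le_c2 := ltW b2_lt_c2.
have lowmid : secant_bracket (hrho b c q1 q2) hrho_slope [set z | 0 <= z <= c ^+ 2].
  apply: sub_secant_bracket (secant_bracket_glue (m := b ^+ 2) low mid _ _ _ _) _.
  - by move=> x /andP[].
  - by rewrite /= sqr_ge0 lexx.
  - by move=> x /andP[].
  - by rewrite /= lexx.
  - move=> z /andP[z0 zc]; case: (leP z (b ^+ 2)) => zb; [left | right].
      by rewrite /= z0.
    by rewrite /= zc ltW.
apply: sub_secant_bracket (secant_bracket_glue (m := c ^+ 2) lowmid high _ _ _ _) _.
- by move=> x /andP[].
- by rewrite /= lexx (le_trans (sqr_ge0 b)).
- by [].
- by rewrite /=.
- move=> z /= z0; case: (leP z (c ^+ 2)) => zc; [left | right].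
    by rewrite /= z0.
  by rewrite /= ltW.
Qed.

Lemma hrho_slope_ge0 z : 0 <= z -> 0 <= hrho_slope z.
Proof.
move=> z0; rewrite /hrho_slope; case: ifP => _; first by rewrite invr_ge0.
case: ifP => // zc; apply: divr_ge0; last by rewrite mulr_ge0 ?sqrtr_ge0.
by rewrite rho_mid_slope_ge0 // sqrtr_le_sqr.
Qed.

Lemma hrho_concave x y t : 0 <= x -> 0 <= y -> 0 <= t <= 1 ->
  t * hrho b c q1 q2 x + (1 - t) * hrho b c q1 q2 y <= hrho b c q1 q2 (t * x + (1 - t) * y).
Proof.
move=> x0 y0 t01; have /andP[t0 t1] := t01.
apply: (secant_bracket_concave hrho_secant x0 y0 _ t01).
by rewrite /= addr_ge0 ?mulr_ge0 ?subr_ge0.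
Qed.

Lemma hrho_nondecreasing x y : 0 <= x -> x <= y -> hrho b c q1 q2 x <= hrho b c q1 q2 y.
Proof.
move=> x0 xy; apply: secant_bracket_nondecreasing hrho_secant _ x0 (le_trans x0 xy) xy.
exact: hrho_slope_ge0.
Qed.

Lemma hrho_ge0 x : 0 <= x -> 0 <= hrho b c q1 q2 x.
Proof.
move=> x0; apply: le_trans (hrho_nondecreasing (lexx 0) x0).
by rewrite /hrho /rho sqrtr0 normr0 b_ge0 expr0n mul0r.
Qed.

End Rho.

Section ConvexCombination.
Variable R : numDomainType.
Implicit Types a b c t w : R.

Lemma ler_convex_combMl w a b c t : 0 <= w -> t * a + (1 - t) * b <= c ->
  t * (w * a) + (1 - t) * (w * b) <= w * c.
Proof.
move=> w0 abc; rewrite mulrCA [X in _ + X]mulrCA -mulrDr.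
exact: ler_wpM2l.
Qed.

Lemma ler_convex_comb_sum (I : finType) (a b c : I -> R) t :
  (forall i, t * a i + (1 - t) * b i <= c i) ->
  t * (\sum_i a i) + (1 - t) * (\sum_i b i) <= \sum_i c i.
Proof. by move=> abc; rewrite !mulr_sumr -big_split; apply: ler_sum => i _; apply: abc. Qed.

End ConvexCombination.

Section CellPCA.
Variables (R : realType) (n p : nat) (M : 'I_n -> 'I_p -> bool).
Variables (sig1 : 'I_p -> R) (sig2 : R) (b1 c1 q11 q12 b2 c2 q21 q22 : R).

Let mi i := (\sum_(j < p) nat_of_bool (M i j))%N.

(* [(rt_i / sig2)^2] in the paper's notation, with [f i j] playing the role of [r_ij^2]. *)
Definition cell_rt2 (f : 'M[R]_(n, p)) i := (mi i)%:R^-1 / sig2 ^+ 2 *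
  \sum_(j < p) (M i j : nat)%:R * sig1 j ^+ 2 * hrho b1 c1 q11 q12 (f i j / sig1 j ^+ 2).

Lemma cellLE f : cellL M sig1 sig2 b1 c1 q11 q12 b2 c2 q21 q22 f =
  sig2 ^+ 2 / (\sum_i mi i)%N%:R * \sum_i (mi i)%:R * hrho b2 c2 q21 q22 (cell_rt2 f i).
Proof. by []. Qed.

Hypothesis adm1 : rho_admissible b1 c1 q11 q12.

Lemma cell_rt2_ge0 (f : 'M[R]_(n, p)) i : (forall i j, 0 <= f i j) -> 0 <= cell_rt2 f i.
Proof.
move=> f0; apply: mulr_ge0; first by rewrite divr_ge0 ?invr_ge0 ?sqr_ge0.
apply: sumr_ge0 => j _; apply: mulr_ge0; first by rewrite mulr_ge0 ?sqr_ge0.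
by apply: (hrho_ge0 adm1); rewrite divr_ge0 ?sqr_ge0.
Qed.

Lemma cell_rt2_concave (f g : 'M[R]_(n, p)) t i :
  (forall i j, 0 <= f i j) -> (forall i j, 0 <= g i j) -> 0 <= t <= 1 ->
  t * cell_rt2 f i + (1 - t) * cell_rt2 g i <= cell_rt2 (t *: f + (1 - t) *: g) i.
Proof.
move=> f0 g0 t01; apply: ler_convex_combMl; first by rewrite divr_ge0 ?invr_ge0 ?sqr_ge0.
apply: ler_convex_comb_sum => j; apply: ler_convex_combMl; first by rewrite mulr_ge0 ?sqr_ge0.
rewrite !mxE [(_ + _) / _]mulrDl -!mulrA.
by apply: (hrho_concave adm1); rewrite // divr_ge0 ?sqr_ge0.
Qed.

End CellPCA.

Unset Implicit Arguments.
Set Strict Implicit.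

Theorem lemma2 (R : realType) (n p : nat) (M : 'I_n -> 'I_p -> bool)
  (sig1 : 'I_p -> R) (sig2 : R)
  (b1 c1 q11 q12 b2 c2 q21 q22 : R) :
  (forall i : 'I_n, (0 < \sum_(j < p) nat_of_bool (M i j))%N) ->
  (forall j : 'I_p, 0 < sig1 j) ->
  0 < sig2 ->
  rho_admissible b1 c1 q11 q12 ->
  rho_admissible b2 c2 q21 q22 ->
  forall (f g : 'M[R]_(n, p)) (t : R),
    (forall i j, 0 <= f i j) -> (forall i j, 0 <= g i j) ->
    0 <= t <= 1 ->
    t * cellL M sig1 sig2 b1 c1 q11 q12 b2 c2 q21 q22 f
      + (1 - t) * cellL M sig1 sig2 b1 c1 q11 q12 b2 c2 q21 q22 g
    <= cellL M sig1 sig2 b1 c1 q11 q12 b2 c2 q21 q22 (t *: f + (1 - t) *: g).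
Proof.
move=> _ _ _ adm1 adm2 f g t f0 g0 t01; rewrite !cellLE.
apply: ler_convex_combMl; first by rewrite divr_ge0 ?sqr_ge0.
apply: ler_convex_comb_sum => i; apply: ler_convex_combMl => //.
have rt2_ge0 := cell_rt2_ge0 M sig1 sig2 adm1.
apply: le_trans (hrho_concave adm2 (rt2_ge0 f i f0) (rt2_ge0 g i g0) t01) _.
apply: hrho_nondecreasing (cell_rt2_concave M sig1 sig2 adm1 i f0 g0 t01) => //.
have /andP[t0 t1] := t01.
by apply: addr_ge0; apply: mulr_ge0; rewrite ?subr_ge0 //; apply: rt2_ge0.
Qed.
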